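(* For all integers $1\le m<n$ there exists a full-rank $A_1\in\mathbb R^{m\times n}$ such that for all $0<p,q<\infty$: $A_1^\dagger\in\mathrm{ginv}_{\mathrm{col}(p,q)}(A_1)$ if and only if $p=2$.
   Context: Generalized inverses are taken real: $\mathcal G(A)=\{X\in\mathbb R^{n\times m}:AX=I_m\}$, $\mathrm{ginv}_\nu(A)=\arg\min_{X\in\mathcal G(A)}\|X\|_\nu$ (a set). For $M$ with columns $m_j$, $\|M\|_{\mathrm{col}(p,q)}=(\sum_j\|m_j\|_p^q)^{1/q}$ (a quasi-norm when $p<1$ or $q<1$). $A^\dagger=A^\top(AA^\top)^{-1}$. *)

From Stdlib Require Import Reals Lra Lia.
Open Scope R_scope.

(* Matrices are functions nat -> nat -> R; only entries within the stated
   dimensions are ever used. *)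
Definition Mat := nat -> nat -> R.

Fixpoint rsum (n : nat) (f : nat -> R) : R :=
  match n with O => 0 | S k => rsum k f + f k end.

(* x^y for x >= 0, y > 0, with 0^y = 0 (Stdlib's Rpower gives Rpower 0 y = 1). *)
Definition rpow (x y : R) : R :=
  if Req_EM_T x 0 then 0 else Rpower x y.

Definition mmul (k : nat) (A B : Mat) : Mat :=
  fun i j => rsum k (fun l => A i l * B l j).

Definition transp (A : Mat) : Mat := fun i j => A j i.

Definition is_identity (m : nat) (M : Mat) : Prop :=
  forall i j, (i < m)%nat -> (j < m)%nat ->
    M i j = if Nat.eq_dec i j then 1 else 0.

Definition in_G (m n : nat) (A X : Mat) : Prop := is_identity m (mmul n A X).

Definition vnorm (n : nat) (p : R) (v : nat -> R) : R :=
  rpow (rsum n (fun i => rpow (Rabs (v i)) p)) (1 / p).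

Definition colnorm (n m : nat) (p q : R) (M : Mat) : R :=
  rpow (rsum m (fun j => rpow (vnorm n p (fun i => M i j)) q)) (1 / q).

Definition in_ginv_col (m n : nat) (p q : R) (A X : Mat) : Prop :=
  in_G m n A X /\
  forall Y, in_G m n A Y -> colnorm n m p q X <= colnorm n m p q Y.

Definition full_rank (m n : nat) (A : Mat) : Prop :=
  forall c : nat -> R,
    (forall j, (j < n)%nat -> rsum m (fun i => c i * A i j) = 0) ->
    forall i, (i < m)%nat -> c i = 0.

(* X = A^dagger = A^T (A A^T)^{-1}: Y is the (two-sided) inverse of A A^T
   and X = A^T Y (as n x m matrices). *)
Definition is_pinv (m n : nat) (A X : Mat) : Prop :=
  exists Y : Mat,
    is_identity m (mmul m (mmul n A (transp A)) Y) /\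
    is_identity m (mmul m Y (mmul n A (transp A))) /\
    forall i j, (i < n)%nat -> (j < m)%nat -> X i j = mmul m (transp A) Y i j.

(* Take A1 = [I_m | 2 e_0 | 0], so that A1 A1^T = diag(5, 1, ..., 1) and A1^dagger has
   columns e_j (j >= 1) and (e_0 + 2 e_m)/5 (j = 0).  Every generalized inverse X of A1
   satisfies X_jj = 1 for j >= 1 and X_00 + 2 X_m0 = 1, so for p = 2 each column of
   A1^dagger has least 2-norm, the bound for column 0 being Cauchy-Schwarz; hence A1^dagger
   minimizes every col(2,q) norm.  For p <> 2, moving column 0 along 2 e_0 - e_m (which A1
   kills) changes its p-th power norm by t |-> (1/5 + 2t)^p + (2/5 - t)^p, whose derivative
   at 0 is p 5^(1-p) (2 - 2^(p-1)) <> 0; some small t therefore gives a generalized inverse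
   with a strictly smaller col(p,q) norm. *)

From Stdlib Require Import Reals Lra Lia.
Open Scope R_scope.

Ltac destruct_eqb :=
  repeat (match goal with
          | |- context [Nat.eqb ?a ?b] => destruct (Nat.eqb_spec a b)
          | |- context [Nat.eq_dec ?a ?b] => destruct (Nat.eq_dec a b)
          end; try subst);
  try lia; try lra; try nra.

Lemma rsum_ext n f g : (forall k, (k < n)%nat -> f k = g k) -> rsum n f = rsum n g.
Proof.
  induction n as [|n IH]; intros Hfg; simpl; [reflexivity|].
  rewrite IH, Hfg; auto; intros; apply Hfg; lia.
Qed.

Lemma rsum_le n f g : (forall k, (k < n)%nat -> f k <= g k) -> rsum n f <= rsum n g.
Proof.
  induction n as [|n IH]; intros Hfg; simpl; [lra|].
  assert (rsum n f <= rsum n g) by (apply IH; intros; apply Hfg; lia).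
  assert (f n <= g n) by (apply Hfg; lia).
  lra.
Qed.

Lemma rsum_lt n f g a : (a < n)%nat -> (forall k, (k < n)%nat -> f k <= g k) -> f a < g a ->
  rsum n f < rsum n g.
Proof.
  induction n as [|n IH]; intros Ha Hfg Hlt; simpl; [lia|].
  assert (f n <= g n) by (apply Hfg; lia).
  destruct (Nat.eq_dec a n) as [->|Han].
  - assert (rsum n f <= rsum n g) by (apply rsum_le; intros; apply Hfg; lia). lra.
  - assert (rsum n f < rsum n g) by (apply IH; try lia; auto; intros; apply Hfg; lia). lra.
Qed.

Lemma rsum_nonneg n f : (forall k, (k < n)%nat -> 0 <= f k) -> 0 <= rsum n f.
Proof.
  induction n as [|n IH]; intros Hf; simpl; [lra|].
  assert (0 <= rsum n f) by (apply IH; intros; apply Hf; lia).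
  assert (0 <= f n) by (apply Hf; lia).
  lra.
Qed.

Lemma rsum_eq0 n f : (forall k, (k < n)%nat -> f k = 0) -> rsum n f = 0.
Proof.
  induction n as [|n IH]; intros Hf; simpl; [reflexivity|].
  rewrite IH, Hf; [lra|lia|intros; apply Hf; lia].
Qed.

Lemma rsum_single n f a : (a < n)%nat ->
  (forall k, (k < n)%nat -> k <> a -> f k = 0) -> rsum n f = f a.
Proof.
  induction n as [|n IH]; intros Ha Hf; simpl; [lia|].
  destruct (Nat.eq_dec n a) as [->|Hna].
  - rewrite rsum_eq0; [lra|]. intros k Hk. apply Hf; lia.
  - rewrite IH, (Hf n); try lia; [lra|]. intros k Hk Hka. apply Hf; lia.
Qed.

Lemma rsum_pair n f a b : a <> b -> (a < n)%nat -> (b < n)%nat ->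
  (forall k, (k < n)%nat -> k <> a -> k <> b -> f k = 0) -> rsum n f = f a + f b.
Proof.
  induction n as [|n IH]; intros Hab Ha Hb Hf; simpl; [lia|].
  destruct (Nat.eq_dec n a) as [->|Hna]; [|destruct (Nat.eq_dec n b) as [->|Hnb]].
  - rewrite (rsum_single _ _ b); [lra|lia|]. intros k Hk Hkb. apply Hf; lia.
  - rewrite (rsum_single _ _ a); [lra|lia|]. intros k Hk Hka. apply Hf; lia.
  - rewrite IH, (Hf n); try lia; [lra|]. intros k Hk Hka Hkb. apply Hf; lia.
Qed.

Lemma rsum_ge_single n f a : (a < n)%nat -> (forall k, (k < n)%nat -> 0 <= f k) ->
  f a <= rsum n f.
Proof.
  intros Ha Hf.
  apply Rle_trans with (rsum n (fun k => if Nat.eqb k a then f a else 0)).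
  - rewrite (rsum_single _ _ a) by (lia || intros; destruct_eqb).
    rewrite Nat.eqb_refl. lra.
  - apply rsum_le. intros k Hk. destruct_eqb. apply Hf; lia.
Qed.

Lemma rsum_ge_pair n f a b : a <> b -> (a < n)%nat -> (b < n)%nat ->
  (forall k, (k < n)%nat -> 0 <= f k) -> f a + f b <= rsum n f.
Proof.
  intros Hab Ha Hb Hf.
  set (g k := if Nat.eqb k a then f a else if Nat.eqb k b then f b else 0).
  assert (Hg : rsum n g = f a + f b).
  { rewrite (rsum_pair _ _ a b) by (auto; intros; unfold g; destruct_eqb).
    unfold g. destruct_eqb. }
  rewrite <- Hg. apply rsum_le. intros k Hk. unfold g. destruct_eqb; apply Hf; lia.
Qed.

Lemma rpow_0 y : rpow 0 y = 0.
Proof. unfold rpow. destruct (Req_EM_T 0 0); [reflexivity|lra]. Qed.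

Lemma rpow_Rpower x y : 0 < x -> rpow x y = Rpower x y.
Proof. intros Hx. unfold rpow. destruct (Req_EM_T x 0); [lra|reflexivity]. Qed.

Lemma rpow_nonneg x y : 0 <= rpow x y.
Proof. unfold rpow. destruct (Req_EM_T x 0); [lra|]. left. apply exp_pos. Qed.

Lemma rpow_lt x x' y : 0 <= x -> x < x' -> 0 < y -> rpow x y < rpow x' y.
Proof.
  intros [Hx|<-] Hxx' Hy; rewrite (rpow_Rpower x') by lra.
  - rewrite rpow_Rpower by lra. apply Rlt_Rpower_l; lra.
  - rewrite rpow_0. apply exp_pos.
Qed.

Lemma rpow_le x x' y : 0 <= x -> x <= x' -> 0 < y -> rpow x y <= rpow x' y.
Proof. intros Hx [Hxx'|<-] Hy; [left; apply rpow_lt|right]; auto. Qed.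

Lemma rpow_abs_2 x : rpow (Rabs x) 2 = x * x.
Proof.
  destruct (Req_dec x 0) as [->|Hx]; [rewrite Rabs_R0, rpow_0; ring|].
  assert (Hpos : 0 < Rabs x) by (apply Rabs_pos_lt; exact Hx).
  rewrite rpow_Rpower by exact Hpos.
  replace 2 with (INR 2) by (simpl; ring).
  rewrite Rpower_pow by exact Hpos. simpl.
  rewrite Rmult_1_r, <- Rabs_mult. apply Rabs_pos_eq. nra.
Qed.

Definition col_pow_sum (n : nat) (p : R) (M : Mat) (j : nat) : R :=
  rsum n (fun i => rpow (Rabs (M i j)) p).

Lemma col_pow_sum_nonneg n p M j : 0 <= col_pow_sum n p M j.
Proof. apply rsum_nonneg. intros. apply rpow_nonneg. Qed.

Lemma col_pow_sum_ext n p M M' j : (forall i, (i < n)%nat -> M i j = M' i j) ->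
  col_pow_sum n p M j = col_pow_sum n p M' j.
Proof. intros HM. apply rsum_ext. intros i Hi. rewrite HM by exact Hi. reflexivity. Qed.

Lemma col_pow_sum_2 n M j : col_pow_sum n 2 M j = rsum n (fun i => M i j * M i j).
Proof. apply rsum_ext. intros. apply rpow_abs_2. Qed.

Section ColNormMonotone.

Variables (m n : nat) (p q : R).
Hypotheses (Hp : 0 < p) (Hq : 0 < q).

Let col_term (s : R) : R := rpow (rpow s (1 / p)) q.

Lemma colnorm_col_pow_sum (M : Mat) :
  colnorm n m p q M = rpow (rsum m (fun j => col_term (col_pow_sum n p M j))) (1 / q).
Proof. reflexivity. Qed.

Lemma col_term_lt s s' : 0 <= s -> s < s' -> col_term s < col_term s'.
Proof.
  intros Hs Hss'. unfold col_term.
  apply rpow_lt; [apply rpow_nonneg| |exact Hq].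
  apply rpow_lt; [exact Hs|exact Hss'|apply Rdiv_lt_0_compat; lra].
Qed.

Lemma col_term_le s s' : 0 <= s -> s <= s' -> col_term s <= col_term s'.
Proof. intros Hs [Hss'|<-]; [left; apply col_term_lt|right]; auto. Qed.

Lemma colnorm_le (X Y : Mat) :
  (forall j, (j < m)%nat -> col_pow_sum n p X j <= col_pow_sum n p Y j) ->
  colnorm n m p q X <= colnorm n m p q Y.
Proof.
  intros HXY. rewrite !colnorm_col_pow_sum.
  apply rpow_le; [| |apply Rdiv_lt_0_compat; lra].
  - apply rsum_nonneg. intros. apply rpow_nonneg.
  - apply rsum_le. intros j Hj. apply col_term_le; [apply col_pow_sum_nonneg|auto].
Qed.

Lemma colnorm_lt (X Y : Mat) a : (a < m)%nat ->
  (forall j, (j < m)%nat -> col_pow_sum n p X j <= col_pow_sum n p Y j) ->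
  col_pow_sum n p X a < col_pow_sum n p Y a ->
  colnorm n m p q X < colnorm n m p q Y.
Proof.
  intros Ha HXY Hlt. rewrite !colnorm_col_pow_sum.
  apply rpow_lt; [| |apply Rdiv_lt_0_compat; lra].
  - apply rsum_nonneg. intros. apply rpow_nonneg.
  - apply (rsum_lt _ _ _ a Ha).
    + intros j Hj. apply col_term_le; [apply col_pow_sum_nonneg|auto].
    + apply col_term_lt; [apply col_pow_sum_nonneg|exact Hlt].
Qed.

Lemma colnorm_ext (X Y : Mat) : (forall i j, (i < n)%nat -> (j < m)%nat -> X i j = Y i j) ->
  colnorm n m p q X = colnorm n m p q Y.
Proof.
  intros HXY. apply Rle_antisym; apply colnorm_le; intros j Hj;
    right; apply col_pow_sum_ext; intros i Hi; rewrite HXY; auto.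
Qed.

Lemma in_ginv_col_ext (A X Y : Mat) :
  (forall i j, (i < n)%nat -> (j < m)%nat -> X i j = Y i j) ->
  in_ginv_col m n p q A Y -> in_ginv_col m n p q A X.
Proof.
  intros HXY [HY Hmin]. split.
  - intros i j Hi Hj. rewrite <- (HY i j Hi Hj). apply rsum_ext.
    intros k Hk. rewrite HXY; auto.
  - intros Z HZ. rewrite (colnorm_ext X Y HXY). apply Hmin, HZ.
Qed.

End ColNormMonotone.

Lemma derivable_pt_lim_local_min f a b c l : a < c < b ->
  (forall x, a < x < b -> f c <= f x) -> derivable_pt_lim f c l -> l = 0.
Proof.
  intros [Hac Hcb] Hmin Hl.
  rewrite <- (derive_pt_eq_0 f c l (exist _ l Hl) Hl).
  apply (deriv_minimum f a b); auto.
Qed.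

Lemma derivable_pt_lim_affine a u x : derivable_pt_lim (fun t => a + u * t) x u.
Proof.
  intros eps Heps. exists (mkposreal 1 Rlt_0_1). intros h Hh _.
  replace ((a + u * (x + h) - (a + u * x)) / h - u) with 0 by (field; exact Hh).
  rewrite Rabs_R0. exact Heps.
Qed.

Lemma derivable_pt_lim_Rpower_affine a u p : 0 < a ->
  derivable_pt_lim (fun t => Rpower (a + u * t) p) 0 (p * Rpower a (p - 1) * u).
Proof.
  intros Ha.
  replace (p * Rpower a (p - 1) * u) with (p * Rpower (a + u * 0) (p - 1) * u)
    by (rewrite Rmult_0_r, Rplus_0_r; reflexivity).
  apply (derivable_pt_lim_comp (fun t => a + u * t) (fun x => Rpower x p)).
  - apply derivable_pt_lim_affine.
  - apply derivable_pt_lim_power. lra.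
Qed.

Lemma Rpower_affine_pair_stationary a b u v p d : 0 < a -> 0 < b -> 0 < d ->
  (forall t, -d < t < d ->
     Rpower a p + Rpower b p <= Rpower (a + u * t) p + Rpower (b + v * t) p) ->
  p * Rpower a (p - 1) * u + p * Rpower b (p - 1) * v = 0.
Proof.
  intros Ha Hb Hd Hmin.
  apply (derivable_pt_lim_local_min
           (fun t => Rpower (a + u * t) p + Rpower (b + v * t) p) (-d) d 0); [lra| |].
  - intros t Ht. rewrite !Rmult_0_r, !Rplus_0_r. apply Hmin, Ht.
  - apply derivable_pt_lim_plus; apply derivable_pt_lim_Rpower_affine; assumption.
Qed.

Lemma Rpower_double_eq x p : 0 < x ->
  Rpower (2 * x) (p - 1) = 2 * Rpower x (p - 1) -> p = 2.
Proof.
  intros Hx E.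
  rewrite <- Rpower_mult_distr in E by lra.
  assert (Hpos : 0 < Rpower x (p - 1)) by apply exp_pos.
  assert (E2 : Rpower 2 (p - 1) = 2).
  { apply (Rmult_eq_reg_r (Rpower x (p - 1))); lra. }
  apply (f_equal ln) in E2. rewrite ln_Rpower in E2.
  assert (0 < ln 2) by (rewrite <- ln_1; apply ln_increasing; lra).
  apply (Rmult_eq_reg_r (ln 2)); lra.
Qed.

Definition diag (d : nat -> R) : Mat := fun i j => if Nat.eqb i j then d i else 0.

Lemma mmul_ext k A A' B B' i j :
  (forall l, (l < k)%nat -> A i l = A' i l) -> (forall l, (l < k)%nat -> B l j = B' l j) ->
  mmul k A B i j = mmul k A' B' i j.
Proof. intros HA HB. apply rsum_ext. intros l Hl. rewrite HA, HB; auto. Qed.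

Lemma mmul_diag_l k d B i j : (i < k)%nat -> mmul k (diag d) B i j = d i * B i j.
Proof.
  intros Hi. unfold mmul, diag.
  rewrite (rsum_single _ _ i Hi) by (intros; destruct_eqb). rewrite Nat.eqb_refl. reflexivity.
Qed.

Lemma mmul_diag_r k A d i j : (j < k)%nat -> mmul k A (diag d) i j = A i j * d j.
Proof.
  intros Hj. unfold mmul, diag.
  rewrite (rsum_single _ _ j Hj) by (intros; destruct_eqb). rewrite Nat.eqb_refl. reflexivity.
Qed.

Lemma is_identity_mmul_diag k d d' : (forall i, d i * d' i = 1) ->
  is_identity k (mmul k (diag d) (diag d')).
Proof.
  intros Hdd' i j Hi Hj. rewrite mmul_diag_l by exact Hi. unfold diag.
  destruct (Nat.eq_dec i j), (Nat.eqb_spec i j); try contradiction; [apply Hdd'|ring].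
Qed.

Lemma diag_left_inverse k d Y : (forall i, d i <> 0) -> is_identity k (mmul k (diag d) Y) ->
  forall i j, (i < k)%nat -> (j < k)%nat -> Y i j = diag (fun l => / d l) i j.
Proof.
  intros Hd HY i j Hi Hj. specialize (HY i j Hi Hj).
  rewrite mmul_diag_l in HY by exact Hi. specialize (Hd i). unfold diag.
  apply (Rmult_eq_reg_l (d i)); [rewrite HY|exact Hd].
  destruct (Nat.eq_dec i j), (Nat.eqb_spec i j); try contradiction; field; exact Hd.
Qed.

Section ExampleMatrix.

Variables m n : nat.
Hypotheses (Hm : (1 <= m)%nat) (Hmn : (m < n)%nat).

Definition A1 : Mat := fun i k =>
  (if Nat.eqb k i then 1 else 0) + (if Nat.eqb i 0 then (if Nat.eqb k m then 2 else 0) else 0).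

Lemma A1_mul Y i j : (i < m)%nat ->
  mmul n A1 Y i j = Y i j + (if Nat.eqb i 0 then 2 * Y m j else 0).
Proof.
  intros Hi. unfold mmul.
  rewrite (rsum_pair _ _ i m) by (lia || intros; unfold A1; destruct_eqb).
  unfold A1. destruct_eqb.
Qed.

Lemma full_rank_A1 : full_rank m n A1.
Proof.
  intros c Hc i Hi. specialize (Hc i ltac:(lia)).
  rewrite (rsum_single _ _ i Hi) in Hc by (intros; unfold A1; destruct_eqb).
  revert Hc. unfold A1. destruct_eqb.
Qed.

Definition gram_diag (i : nat) : R := if Nat.eqb i 0 then 5 else 1.

Lemma gram_diag_neq0 i : gram_diag i <> 0.
Proof. unfold gram_diag. destruct_eqb. Qed.

Lemma A1_gram i j : (i < m)%nat -> (j < m)%nat ->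
  mmul n A1 (transp A1) i j = diag gram_diag i j.
Proof.
  intros Hi Hj. rewrite A1_mul by exact Hi. unfold transp, A1, diag, gram_diag. destruct_eqb.
Qed.

Definition A1_pinv : Mat := fun k j => A1 j k / gram_diag j.

Lemma is_pinv_A1 : is_pinv m n A1 A1_pinv.
Proof.
  exists (diag (fun i => / gram_diag i)). split; [|split].
  - intros i j Hi Hj.
    rewrite (mmul_ext _ _ (diag gram_diag) _ (diag (fun i => / gram_diag i)))
      by (intros; auto; apply A1_gram; lia).
    apply is_identity_mmul_diag; auto.
    intros l. field. apply gram_diag_neq0.
  - intros i j Hi Hj.
    rewrite (mmul_ext _ _ (diag (fun i => / gram_diag i)) _ (diag gram_diag))
      by (intros; auto; apply A1_gram; lia).
    apply is_identity_mmul_diag; auto.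
    intros l. field. apply gram_diag_neq0.
  - intros i j Hi Hj. rewrite mmul_diag_r by exact Hj. reflexivity.
Qed.

Lemma is_pinv_A1_eq X : is_pinv m n A1 X ->
  forall i j, (i < n)%nat -> (j < m)%nat -> X i j = A1_pinv i j.
Proof.
  intros [Y [HY [_ HX]]].
  assert (HYdiag : forall l j, (l < m)%nat -> (j < m)%nat ->
            Y l j = diag (fun l => / gram_diag l) l j).
  { apply diag_left_inverse; [apply gram_diag_neq0|].
    intros l j Hl Hj. rewrite <- (HY l j Hl Hj).
    apply mmul_ext; [intros; symmetry; apply A1_gram; lia|reflexivity]. }
  intros i j Hi Hj.
  rewrite HX, (mmul_ext _ _ (transp A1) _ (diag (fun l => / gram_diag l))) by auto.
  rewrite mmul_diag_r by exact Hj. reflexivity.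
Qed.

Lemma in_G_A1_pinv : in_G m n A1 A1_pinv.
Proof.
  intros i j Hi Hj. rewrite A1_mul by exact Hi. unfold A1_pinv, A1, gram_diag. destruct_eqb.
Qed.

(* Column 0 moves along [2 e_0 - e_m], which [A1] maps to 0. *)
Definition A1_pinv_shift (t : R) : Mat := fun k j =>
  A1_pinv k j +
  (if Nat.eqb j 0
   then t * ((if Nat.eqb k 0 then 2 else 0) - (if Nat.eqb k m then 1 else 0))
   else 0).

Lemma in_G_A1_pinv_shift t : in_G m n A1 (A1_pinv_shift t).
Proof.
  intros i j Hi Hj. rewrite A1_mul by exact Hi.
  unfold A1_pinv_shift, A1_pinv, A1, gram_diag. destruct_eqb.
Qed.

Lemma A1_pinv_shift_0 k j : A1_pinv_shift 0 k j = A1_pinv k j.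
Proof. unfold A1_pinv_shift. destruct_eqb. Qed.

Lemma A1_pinv_shift_other_col t k j : j <> 0%nat -> A1_pinv_shift t k j = A1_pinv k j.
Proof. intros Hj. unfold A1_pinv_shift. destruct_eqb. Qed.

Lemma col_pow_sum_A1_pinv_shift p t :
  col_pow_sum n p (A1_pinv_shift t) 0%nat =
  rpow (Rabs (1/5 + 2 * t)) p + rpow (Rabs (2/5 - t)) p.
Proof.
  assert (H0 : A1_pinv_shift t 0%nat 0%nat = 1/5 + 2 * t)
    by (unfold A1_pinv_shift, A1_pinv, A1, gram_diag; destruct_eqb).
  assert (Hm0 : A1_pinv_shift t m 0%nat = 2/5 - t)
    by (unfold A1_pinv_shift, A1_pinv, A1, gram_diag; destruct_eqb).
  unfold col_pow_sum. rewrite (rsum_pair _ _ 0%nat m), H0, Hm0; try lia; [reflexivity|].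
  intros k Hk Hk0 Hkm.
  replace (A1_pinv_shift t k 0%nat) with 0
    by (unfold A1_pinv_shift, A1_pinv, A1, gram_diag; destruct_eqb).
  rewrite Rabs_R0. apply rpow_0.
Qed.

Lemma col_pow_sum_A1_pinv_shift_Rpower p t : -(1/10) < t < 2/5 ->
  col_pow_sum n p (A1_pinv_shift t) 0%nat = Rpower (1/5 + 2 * t) p + Rpower (2/5 + -1 * t) p.
Proof.
  intros Ht. rewrite col_pow_sum_A1_pinv_shift, !Rabs_pos_eq, !rpow_Rpower by lra.
  replace (2/5 - t) with (2/5 + -1 * t) by ring. reflexivity.
Qed.

Lemma col_pow_sum_2_A1_pinv_le Y j : in_G m n A1 Y -> (j < m)%nat ->
  col_pow_sum n 2 A1_pinv j <= col_pow_sum n 2 Y j.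
Proof.
  intros HY Hj. specialize (HY j j Hj Hj). rewrite A1_mul in HY by exact Hj.
  destruct (Nat.eq_dec j j) as [_|]; [|contradiction].
  destruct (Nat.eq_dec j 0%nat) as [->|Hj0].
  - rewrite Nat.eqb_refl in HY.
    rewrite (col_pow_sum_ext _ _ _ (A1_pinv_shift 0))
      by (intros; symmetry; apply A1_pinv_shift_0).
    rewrite col_pow_sum_A1_pinv_shift, !rpow_abs_2, col_pow_sum_2.
    assert (Hsq : Y 0%nat 0%nat * Y 0%nat 0%nat + Y m 0%nat * Y m 0%nat
                  <= rsum n (fun i => Y i 0%nat * Y i 0%nat))
      by (apply (rsum_ge_pair n (fun i => Y i 0%nat * Y i 0%nat)); try lia; intros; nra).
    (* [5 (a^2 + b^2) = (a + 2 b)^2 + (2 a - b)^2] *)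
    pose proof (Rle_0_sqr (2 * Y 0%nat 0%nat - Y m 0%nat)) as Hcs. unfold Rsqr in Hcs.
    nra.
  - rewrite !col_pow_sum_2, (rsum_single _ _ j)
      by (lia || intros; unfold A1_pinv, A1, gram_diag; destruct_eqb).
    assert (Hsq : Y j j * Y j j <= rsum n (fun i => Y i j * Y i j))
      by (apply (rsum_ge_single n (fun i => Y i j * Y i j)); try lia; intros; nra).
    revert HY. unfold A1_pinv, A1, gram_diag. destruct_eqb.
Qed.

Lemma in_ginv_col_A1_pinv_2 q : 0 < q -> in_ginv_col m n 2 q A1 A1_pinv.
Proof.
  intros Hq. split; [exact in_G_A1_pinv|].
  intros Y HY. apply colnorm_le; [lra|exact Hq|].
  intros j Hj. apply col_pow_sum_2_A1_pinv_le; assumption.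
Qed.

Lemma in_ginv_col_A1_pinv_eq_2 p q : 0 < p -> 0 < q ->
  in_ginv_col m n p q A1 A1_pinv -> p = 2.
Proof.
  intros Hp Hq [_ Hmin].
  assert (Hlocal : forall t, -(1/20) < t < 1/20 ->
            Rpower (1/5) p + Rpower (2/5) p <= Rpower (1/5 + 2 * t) p + Rpower (2/5 + -1 * t) p).
  { intros t Ht. apply Rnot_lt_le. intros Hlt.
    assert (Hshift_min :
              colnorm n m p q (A1_pinv_shift 0) <= colnorm n m p q (A1_pinv_shift t)).
    { rewrite (colnorm_ext m n p q Hp Hq (A1_pinv_shift 0) A1_pinv)
        by (intros; apply A1_pinv_shift_0).
      apply Hmin, in_G_A1_pinv_shift. }
    enough (colnorm n m p q (A1_pinv_shift t) < colnorm n m p q (A1_pinv_shift 0)) by lra.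
    apply (colnorm_lt m n p q Hp Hq _ _ 0%nat); [lia| |].
    - intros j Hj. destruct (Nat.eq_dec j 0%nat) as [->|Hj0].
      + rewrite !col_pow_sum_A1_pinv_shift_Rpower by lra.
        rewrite !Rmult_0_r, !Rplus_0_r. lra.
      + right. apply col_pow_sum_ext. intros i Hi. rewrite !A1_pinv_shift_other_col; auto.
    - rewrite !col_pow_sum_A1_pinv_shift_Rpower by lra.
      rewrite !Rmult_0_r, !Rplus_0_r. exact Hlt. }
  apply Rpower_affine_pair_stationary in Hlocal; [|lra|lra|lra].
  apply (Rpower_double_eq (1/5)); [lra|].
  replace (2 * (1/5)) with (2/5) by field.
  assert (Hp_ne : p <> 0) by lra.
  apply (Rmult_eq_reg_l p); [lra|exact Hp_ne].
Qed.

End ExampleMatrix.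

Theorem theorem4 :
  forall m n : nat, (1 <= m)%nat -> (m < n)%nat ->
  exists A : Mat,
    full_rank m n A /\
    forall p q : R, 0 < p -> 0 < q ->
      ((forall X : Mat, is_pinv m n A X -> in_ginv_col m n p q A X) <-> p = 2).
Proof.
  intros m n Hm Hmn. exists (A1 m). split; [exact (full_rank_A1 m n Hm Hmn)|].
  intros p q Hp Hq. split.
  - intros Hpinv. apply (in_ginv_col_A1_pinv_eq_2 m n Hm Hmn p q Hp Hq).
    exact (Hpinv _ (is_pinv_A1 m n Hm Hmn)).
  - intros -> X HX. apply (in_ginv_col_ext m n 2 q ltac:(lra) Hq _ X (A1_pinv m)).
    + exact (is_pinv_A1_eq m n Hm Hmn X HX).
    + exact (in_ginv_col_A1_pinv_2 m n Hm Hmn q Hq).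
Qed.
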